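(* Let $n\ge1$, $k\in[n]$, and $f(S)=\min(|S|,k)$ for $S\subseteq[n]$. For every $x\in[0,1]$ and $\mathbf{x}=(x,\dots,x)\in[0,1]^n$, $f^{+}(\mathbf{x})/f^{++}(\mathbf{x})\le 4k/(4k-1)$ (with the convention $0/0=1$). Moreover, when $n$ is even, $k=n/2$ and $x=1/2$, equality $f^{+}(\mathbf{x})/f^{++}(\mathbf{x})=4k/(4k-1)$ holds.
   Context: $[n]=\{1,\dots,n\}$. For $f:2^{[n]}\to\mathbb{R}_+$ and $\mathbf{x}\in[0,1]^n$: the concave closure $f^{+}(\mathbf{x})=\max\sum_{S\subseteq[n]}\theta(S)f(S)$ over $\theta:2^{[n]}\to\mathbb{R}_{\ge0}$ with $\sum_S\theta(S)=1$ and $\sum_{S\ni i}\theta(S)=x_i$ for all $i$; the upper pairwise independent extension $f^{++}(\mathbf{x})$ is the same maximum with the additional constraints $\sum_{S\ni i,j}\theta(S)=x_ix_j$ for all $i<j$. *)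

From HB Require Import structures.
From mathcomp Require Import all_boot all_order all_algebra.
From mathcomp Require Import boolp classical_sets reals.
Set Implicit Arguments. Unset Strict Implicit. Unset Printing Implicit Defensive.
Import Order.TTheory GRing.Theory Num.Theory.
Local Open Scope ring_scope.
Local Open Scope classical_set_scope.

Definition closure_feasible (R : realType) (n : nat)
  (x : 'I_n -> R) (theta : {ffun {set 'I_n} -> R}) : Prop :=
  (forall S, 0 <= theta S) /\
  \sum_(S : {set 'I_n}) theta S = 1 /\
  (forall i : 'I_n, \sum_(S : {set 'I_n} | i \in S) theta S = x i).

Definition pairwise_feasible (R : realType) (n : nat)
  (x : 'I_n -> R) (theta : {ffun {set 'I_n} -> R}) : Prop :=
  closure_feasible x theta /\
  (forall i j : 'I_n, (i < j)%N ->
     \sum_(S : {set 'I_n} | (i \in S) && (j \in S)) theta S = x i * x j).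

Definition lp_value (R : realType) (n : nat) (f : {set 'I_n} -> R)
  (theta : {ffun {set 'I_n} -> R}) : R :=
  \sum_(S : {set 'I_n}) theta S * f S.

(* concave closure f^+(x): the maximum (= supremum; it is attained) of the LP *)
Definition concave_closure (R : realType) (n : nat) (f : {set 'I_n} -> R)
  (x : 'I_n -> R) : R :=
  sup [set v | exists theta, closure_feasible x theta /\ v = lp_value f theta].

Definition upper_pairwise_ext (R : realType) (n : nat) (f : {set 'I_n} -> R)
  (x : 'I_n -> R) : R :=
  sup [set v | exists theta, pairwise_feasible x theta /\ v = lp_value f theta].

Definition budget_fun (R : realType) (n k : nat) (S : {set 'I_n}) : R :=
  (minn #|S| k)%:R.

(* The concave closure is at most min(nx, k): every feasible distribution has expected
   size nx and f <= min(|S|, k).  Conversely, a law p of the size |S| on {0, ..., n}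
   whose factorial moments E[|S|^_j] equal n^_j x^j for j <= 2 lifts, uniformly over the
   sets of each size, to a pairwise feasible distribution.  Supporting p on three sizes
   bracketing the mean (the weights being forced by the moment equations) gives
   E min(|S|, k) >= (1 - 1/(4k)) min(nx, k).  For n = 2k and x = 1/2 this is tight: the
   quadratic 3m/2 - m^2/(2k) dominates min(m, k) on [0, 2k], so the first two moments cap
   f^{++} at k - 1/4, while the point mass at size k gives f^+ = k. *)

From HB Require Import structures.
From mathcomp Require Import all_boot all_order all_algebra.
From mathcomp Require Import reals.
From mathcomp Require Import lra zify ring.
Import Order.TTheory GRing.Theory Num.Theory.
Local Open Scope ring_scope.
Set Implicit Arguments. Unset Strict Implicit. Unset Printing Implicit Defensive.

Lemma bin_ffact_shift n m j : ('C(n, m + j) * (m + j) ^_ j = n ^_ j * 'C(n - j, m))%N.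
Proof.
have [nj|jn] := ltnP n j; first by rewrite (ffact_small nj) bin_small ?mul0n //; lia.
have [nmj|mjn] := ltnP n (m + j); first by rewrite !bin_small ?muln0 ?mul0n //; lia.
have Fmj : ((m + j) ^_ j * m`! = (m + j)`!)%N by rewrite -{2}(addnK j m) ffact_fact ?leq_addl.
have Fn : (n ^_ j * (n - j)`! = n`!)%N by rewrite ffact_fact.
apply/eqP; rewrite -(eqn_pmul2r (_ : 0 < m`! * (n - (m + j))`!)%N); last first.
  by rewrite muln_gt0 !fact_gt0.
have -> : ('C(n, m + j) * (m + j) ^_ j * (m`! * (n - (m + j))`!) =
           'C(n, m + j) * ((m + j)`! * (n - (m + j))`!))%N by rewrite -Fmj; ring.
have -> : (n ^_ j * 'C(n - j, m) * (m`! * (n - (m + j))`!) =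
           n ^_ j * ('C(n - j, m) * (m`! * (n - j - m)`!)))%N.
  by rewrite -subnDA addnC; ring.
by rewrite !bin_fact ?Fn //; lia.
Qed.

Lemma divr_mulrn_ratio (R : fieldType) (c d a b : nat) (y : R) :
  c%:R != 0 :> R -> b%:R != 0 :> R -> (c * a = b * d)%N ->
  y / c%:R *+ d = y * a%:R / b%:R.
Proof.
move=> c0 b0 cab; rewrite -mulr_natr.
have -> : d%:R = c%:R * a%:R / b%:R :> R.
  by apply: (mulIf b0); rewrite mulfVK // -!natrM cab mulnC.
by rewrite !mulrA mulfVK.
Qed.

Definition dist3 (R : nmodType) (c a d : nat) (pc pa pd : R) (m : nat) : R :=
  pc *+ (m == c) + pa *+ (m == a) + pd *+ (m == d).

(* The weight at [c] of the measure on [{c, a, d}] with total mass 1, mean [mu] and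
   second moment [s]: the integral of the Lagrange basis polynomial
   [(t - a) (t - d) / ((c - a) (c - d))]. *)
Definition lagrange_weight (R : fieldType) (c a d mu s : R) : R :=
  (s - (a + d) * mu + a * d) / ((c - a) * (c - d)).

Lemma lagrange_weight_moments (R : fieldType) (c a d mu s : R) :
  c != a -> c != d -> a != d ->
  let wc := lagrange_weight c a d mu s in
  let wa := lagrange_weight a c d mu s in
  let wd := lagrange_weight d c a mu s in
  [/\ wc + wa + wd = 1, wc * c + wa * a + wd * d = mu &
      wc * c ^+ 2 + wa * a ^+ 2 + wd * d ^+ 2 = s].
Proof.
move=> ca cd ad; rewrite /lagrange_weight.
by split; field; rewrite !subr_eq0 ![_ == c]eq_sym [d == a]eq_sym ca cd ad.
Qed.

Lemma natr_ffact2 (R : pzRingType) m : (m ^_ 2)%:R = m%:R * (m%:R - 1) :> R.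
Proof. by case: m => [|m]; rewrite ?mul0r // ffactSS ffactn1 natrM -natr1 addrK. Qed.

(* The source of the factor [1 - 1/(4K)] of the theorem; equality holds for
   [N = 2K] and [x = 1/2]. *)
Lemma quarter_loss_bound (R : realFieldType) (N K x : R) :
  1 <= K -> K <= N -> 0 <= x <= 1 -> K - 1 <= x * (N - 1) <= K ->
  (4 * K - 1) * Num.min (N * x) K <= 4 * K * (K - (1 - x) * (K - x * (N - 1))).
Proof.
move=> K1 KN /andP[x0 x1] /andP[lo hi].
have [KNx|NxK] := leP K (N * x).
  have : (1 - x) * (K - x * (N - 1)) <= (1 - x) * x by rewrite ler_wpM2l; lra.
  have := sqr_ge0 (2 * x - 1); nra.
have gap : N * (1 + x * (N - 1) - K) <= N - K.
  have : 0 <= (N - 1) * (K - N * x) by rewrite mulr_ge0 //; lra.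
  nra.
have amgm : 4 * K * (N - K) <= N * N by have := sqr_ge0 (N - 2 * K); nra.
have -> : 4 * K * (K - (1 - x) * (K - x * (N - 1))) =
    (4 * K - 1) * (N * x) + x * (N - 4 * K * (1 + x * (N - 1) - K)) by ring.
rewrite lerDl mulr_ge0 // subr_ge0 -(ler_pM2l (_ : 0 < N)); nra.
Qed.

Section GroundSet.
Variables (R : realType) (n : nat).

Lemma sum_set_by_card (P : pred {set 'I_n}) (G : nat -> R) :
  \sum_(S : {set 'I_n} | P S) G #|S| =
  \sum_(m < n.+1) G m *+ #|[set S : {set 'I_n} | P S & #|S| == m]|.
Proof.
have card_lt (S : {set 'I_n}) : (#|S| < n.+1)%N.
  by rewrite ltnS -[leqRHS](card_ord n) max_card.
transitivity (\sum_(S : {set 'I_n} | P S) \sum_(m < n.+1 | #|S| == m) G m).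
  apply: eq_bigr => S _; rewrite (big_pred1 (inord #|S|)) ?inordK //.
  by move=> m /=; rewrite -val_eqE /= inordK // eq_sym.
rewrite (exchange_big_dep predT) //=; apply: eq_bigr => m _.
by rewrite -sumr_const; apply: eq_bigl => S; rewrite inE.
Qed.

Lemma card_supsets (A : {set 'I_n}) m :
  #|[set S : {set 'I_n} | A \subset S & #|S| == (m + #|A|)%N]| = 'C(n - #|A|, m).
Proof.
have -> : (n - #|A|)%N = #|~: A| by rewrite -[X in (X - _)%N](card_ord n) -(cardsC A) addKn.
have disjA (B : {set 'I_n}) : B \subset ~: A -> [disjoint B & A].
  by rewrite subsets_disjoint setCK.
have -> : [set S : {set 'I_n} | A \subset S & #|S| == (m + #|A|)%N] =
    (fun B => B :|: A) @: [set B : {set 'I_n} | B \subset ~: A & #|B| == m].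
  apply/setP => S; rewrite inE; apply/andP/imsetP => [[AS /eqP cS]|[B]].
    exists (S :\: A); last by rewrite -{1}(setID S A) (setIidPr AS) setUC.
    by rewrite inE subsetDr cardsD (setIidPr AS) cS addnK /=.
  rewrite inE => /andP[BA /eqP cB] ->.
  by rewrite subsetUr cardsU (disjoint_setI0 (disjA _ BA)) cards0 subn0 cB /=.
have UDK (B : {set 'I_n}) : B \subset ~: A -> (B :|: A) :\: A = B.
  by move=> BA; rewrite setDUl setDv setU0; apply/setDidPl/disjA.
rewrite -cards_draws card_in_imset // => B1 B2; rewrite !inE => /andP[B1A _] /andP[B2A _].
by move=> eqB; rewrite -(UDK _ B1A) eqB UDK.
Qed.

Definition expect (p g : nat -> R) : R := \sum_(m < n.+1) p m * g m.

Definition symmetric_lift (p : nat -> R) : {ffun {set 'I_n} -> R} :=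
  [ffun S : {set 'I_n} => p #|S| / 'C(n, #|S|)%:R].

Lemma sum_symmetric_lift (p g : nat -> R) :
  \sum_(S : {set 'I_n}) symmetric_lift p S * g #|S| = expect p g.
Proof.
under eq_bigr => S _ do rewrite ffunE.
rewrite (sum_set_by_card predT (fun m => p m / 'C(n, m)%:R * g m)).
apply: eq_bigr => m _.
have -> : #|[set S : {set 'I_n} | predT S & #|S| == m]| = 'C(n, m).
  by rewrite -[X in 'C(X, _)](card_ord n) -card_draws; apply: eq_card => S; rewrite !inE.
rewrite mulrAC (@divr_mulrn_ratio _ _ _ 1 1) ?mulr1 ?divr1 ?muln1 ?mul1n ?oner_eq0 //.
by rewrite pnatr_eq0 -lt0n bin_gt0 -ltnS.
Qed.

Lemma sum_symmetric_lift_supsets (p : nat -> R) (A : {set 'I_n}) :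
  \sum_(S : {set 'I_n} | A \subset S) symmetric_lift p S =
  expect p (fun m => (m ^_ #|A|)%:R) / (n ^_ #|A|)%:R.
Proof.
under eq_bigr => S _ do rewrite ffunE.
rewrite (sum_set_by_card _ (fun m => p m / 'C(n, m)%:R)) /expect mulr_suml.
apply: eq_bigr => -[m ltmn] _ /=.
have [ltmA|leAm] := ltnP m #|A|.
  rewrite ffact_small // mulr0 mul0r.
  suff -> : [set S : {set 'I_n} | A \subset S & #|S| == m] = set0 by rewrite cards0.
  apply/setP => S; rewrite !inE; apply/negbTE/andP => -[/subset_leq_card AS /eqP cS].
  by move: AS; rewrite cS leqNgt ltmA.
rewrite -(subnK leAm) card_supsets; apply: divr_mulrn_ratio; rewrite ?bin_ffact_shift //.
  by rewrite pnatr_eq0 -lt0n bin_gt0 subnK // -ltnS.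
by rewrite pnatr_eq0 -lt0n ffact_gt0 -[leqRHS](card_ord n) max_card.
Qed.

Definition factorial_moments (d : nat) (x : R) (p : nat -> R) : Prop :=
  (forall m, 0 <= p m) /\
  forall j, (j <= d)%N -> expect p (fun m => (m ^_ j)%:R) = (n ^_ j)%:R * x ^+ j.

Lemma factorial_moments_le (d d' : nat) (x : R) (p : nat -> R) :
  (d <= d')%N -> factorial_moments d' x p -> factorial_moments d x p.
Proof. by move=> dd' [p_ge0 moments]; split=> // j jd; rewrite moments // (leq_trans jd). Qed.

Lemma sum_symmetric_lift_supsets_moments (d : nat) (x : R) (p : nat -> R) (A : {set 'I_n}) :
  factorial_moments d x p -> (#|A| <= d)%N ->
  \sum_(S : {set 'I_n} | A \subset S) symmetric_lift p S = x ^+ #|A|.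
Proof.
move=> [_ moments] Ad; rewrite sum_symmetric_lift_supsets moments // mulrAC divff ?mul1r //.
by rewrite pnatr_eq0 -lt0n ffact_gt0 -[leqRHS](card_ord n) max_card.
Qed.

Lemma symmetric_lift_closure_feasible (x : R) (p : nat -> R) :
  factorial_moments 1 x p -> closure_feasible (fun _ => x) (symmetric_lift p).
Proof.
move=> moments; split; first by move=> S; rewrite ffunE divr_ge0 //; apply: moments.1.
split.
  rewrite -(expr0 x) -(cards0 'I_n) -(sum_symmetric_lift_supsets_moments moments) ?cards0 //.
  by apply: eq_bigl => S; rewrite sub0set.
move=> i; rewrite -(expr1 x) -(cards1 i) -(sum_symmetric_lift_supsets_moments moments) ?cards1 //.
by apply: eq_bigl => S; rewrite sub1set.
Qed.

Lemma symmetric_lift_pairwise_feasible (x : R) (p : nat -> R) :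
  factorial_moments 2 x p -> pairwise_feasible (fun _ => x) (symmetric_lift p).
Proof.
move=> moments; split.
  exact/symmetric_lift_closure_feasible/(factorial_moments_le _ moments).
move=> i j ltij; have neqij : i != j by rewrite -val_eqE neq_ltn ltij.
have card_ij : #|[set i; j]| = 2%N by rewrite cards2 neqij.
rewrite -expr2 -card_ij -(sum_symmetric_lift_supsets_moments moments) ?card_ij //.
by apply: eq_bigl => S; rewrite subUset !sub1set.
Qed.

Lemma lp_value_symmetric_lift (k : nat) (p : nat -> R) :
  lp_value (@budget_fun R n k) (symmetric_lift p) = expect p (fun m => (minn m k)%:R).
Proof. exact: sum_symmetric_lift. Qed.

Lemma expect_dist3 (c a d : nat) (pc pa pd : R) (g : nat -> R) :
  (c <= n)%N -> (a <= n)%N -> (d <= n)%N ->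
  expect (dist3 c a d pc pa pd) g = pc * g c + pa * g a + pd * g d.
Proof.
have expect_delta (b : nat) (y : R) : (b <= n)%N ->
    \sum_(m < n.+1) y *+ (m == b :> nat) * g m = y * g b.
  move=> bn; rewrite (bigD1 (inord b)) //= inordK // eqxx mulr1n big1 ?addr0 // => m.
  by rewrite -val_eqE /= inordK // => /negbTE->; rewrite mul0r.
move=> cn an dn; rewrite /expect; under eq_bigr do rewrite !mulrDl.
by rewrite !big_split /= !expect_delta.
Qed.

Lemma dist3_factorial_moments (x : R) (c a d : nat) (pc pa pd : R) :
  (c <= n)%N -> (a <= n)%N -> (d <= n)%N -> 0 <= pc -> 0 <= pa -> 0 <= pd ->
  pc + pa + pd = 1 -> pc * c%:R + pa * a%:R + pd * d%:R = n%:R * x ->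
  pc * (c ^_ 2)%:R + pa * (a ^_ 2)%:R + pd * (d ^_ 2)%:R = (n ^_ 2)%:R * x ^+ 2 ->
  factorial_moments 2 x (dist3 c a d pc pa pd).
Proof.
move=> cn an dn pc0 pa0 pd0 mom0 mom1 mom2; split=> [m|j].
  by rewrite !addr_ge0 ?mulrn_wge0.
by case: j => [|[|[|//]]] _; rewrite expect_dist3 // ?mulr1 ?expr0 ?expr1 ?ffactn1.
Qed.

Lemma point_mass_factorial_moments (x : R) (c : nat) :
  (c <= n)%N -> c%:R = n%:R * x -> factorial_moments 1 x (dist3 c c c 1 0 0).
Proof.
move=> cn mean; split=> [m|]; first by rewrite !addr_ge0 ?mulrn_wge0.
by case=> [|[|//]] _; rewrite expect_dist3 // !mul0r !addr0 mul1r ?expr0 ?mulr1 ?ffactn1.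
Qed.

(* [n x] and [n x + n (n - 1) x^2] are the first two moments of the size of a random set
   containing each element independently with probability [x]. *)
Definition size_weight (x : R) (c a d : nat) : R :=
  lagrange_weight c%:R a%:R d%:R (n%:R * x) (n%:R * x + (n ^_ 2)%:R * x ^+ 2).

Definition three_point (x : R) (c a d : nat) : nat -> R :=
  dist3 c a d (size_weight x c a d) (size_weight x a c d) (size_weight x d c a).

Lemma size_weightE (x : R) (c a d : nat) : size_weight x c a d =
  (n%:R * x * (1 - x) + (n%:R * x - a%:R) * (n%:R * x - d%:R)) / ((c%:R - a%:R) * (c%:R - d%:R)).
Proof. by rewrite /size_weight /lagrange_weight natr_ffact2; congr (_ / _); ring. Qed.

Lemma size_weight_moments (x : R) (c a d : nat) : c != a -> c != d -> a != d ->
  let wc := size_weight x c a d in let wa := size_weight x a c d in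
  let wd := size_weight x d c a in
  [/\ wc + wa + wd = 1, wc * c%:R + wa * a%:R + wd * d%:R = n%:R * x &
      wc * (c ^_ 2)%:R + wa * (a ^_ 2)%:R + wd * (d ^_ 2)%:R = (n ^_ 2)%:R * x ^+ 2].
Proof.
move=> ca cd ad; have [] := @lagrange_weight_moments R c%:R a%:R d%:R
  (n%:R * x) (n%:R * x + (n ^_ 2)%:R * x ^+ 2); rewrite ?eqr_nat //.
rewrite -!/(size_weight x _ _ _) => mom0 mom1 mom2; split => //.
by rewrite -[RHS](addKr (n%:R * x)) -{1}mom1 -mom2 !natr_ffact2; ring.
Qed.

Lemma three_point_factorial_moments (x : R) (c a d : nat) :
  (c <= n)%N -> (a <= n)%N -> (d <= n)%N -> c != a -> c != d -> a != d ->
  0 <= size_weight x c a d -> 0 <= size_weight x a c d -> 0 <= size_weight x d c a ->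
  factorial_moments 2 x (three_point x c a d).
Proof.
move=> cn an dn ca cd ad wc0 wa0 wd0; have [] := size_weight_moments x ca cd ad.
exact: dist3_factorial_moments.
Qed.

Definition near_optimal (k : nat) (x : R) (p : nat -> R) : Prop :=
  factorial_moments 2 x p /\
  (4 * k%:R - 1) * Num.min (n%:R * x) k%:R <= 4 * k%:R * expect p (fun m => (minn m k)%:R).

Lemma near_optimal_small_mean (k : nat) (x : R) : (1 <= k <= n)%N -> 0 <= x <= 1 ->
  x * (n%:R - 1) < k%:R - 1 -> exists p, near_optimal k x p.
Proof.
move=> /andP[k1 kn] /andP[x0 x1] small_b.
have Kn : k%:R <= n%:R :> R by rewrite ler_nat.
have K1 : 1 <= k%:R :> R by rewrite ler1n.
have b0 : 0 <= x * (n%:R - 1) by rewrite mulr_ge0 // subr_ge0; lra.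
have /andP[tb bt] := truncn_itv b0; set t := Num.truncn _ in tb bt.
have t2k : (t.+2 <= k)%N by rewrite -(ltr_nat R) -natr1; lra.
have ne0t : 0%N != t.+1 by [].
have ne0k : 0%N != k by rewrite eq_sym -lt0n.
have netk : t.+1 != k by rewrite neq_ltn t2k.
exists (three_point x 0 t.+1 k); split.
  apply: three_point_factorial_moments; rewrite ?(leq_trans (ltnW t2k)) // size_weightE -natr1.
  - by apply: divr_ge0; [nra | rewrite !sub0r mulrNN; nra].
  - by apply: mulr_le0; [nra | rewrite invr_le0; nra].
  - by apply: divr_ge0; nra.
have [_ mean _] := size_weight_moments x ne0t ne0k netk.
rewrite expect_dist3 ?(leq_trans (ltnW t2k)) // min0n minnn (minn_idPl (ltnW t2k)) mean.
have : Num.min (n%:R * x) k%:R <= n%:R * x by rewrite ge_min lexx.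
have : 0 <= Num.min (n%:R * x) k%:R by rewrite le_min mulr_ge0 ?ler0n.
nra.
Qed.

Lemma near_optimal_mid_mean (k : nat) (x : R) : (0 < k < n)%N -> 0 <= x <= 1 ->
  k%:R - 1 <= x * (n%:R - 1) <= k%:R -> exists p, near_optimal k x p.
Proof.
move=> /andP[k0 kn] /andP[x0 x1] /andP[lo hi].
have KN : k%:R < n%:R :> R by rewrite ltr_nat.
have K1 : 1 <= k%:R :> R by rewrite ler1n.
have ne0k : 0%N != k by rewrite eq_sym -lt0n.
have ne0n : 0%N != n by rewrite eq_sym -lt0n (ltn_trans k0).
have nekn : k != n by rewrite ltn_eqF.
exists (three_point x 0 k n); split.
  apply: three_point_factorial_moments; rewrite ?(ltnW kn) // size_weightE.
  - apply: divr_ge0; last by rewrite !sub0r mulrNN; nra.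
    have : 0 <= (n%:R - n%:R * x) * (k%:R - x * (n%:R - 1)) by rewrite mulr_ge0 //; nra.
    nra.
  - apply: mulr_le0; last by rewrite invr_le0 subr0; nra.
    have : n%:R * x * (1 + x * (n%:R - 1) - n%:R) <= 0 by rewrite mulr_ge0_le0 ?mulr_ge0 //; nra.
    rewrite subr0; nra.
  - by apply: divr_ge0; nra.
have [total _ _] := size_weight_moments x ne0k ne0n nekn.
have mass0 : k%:R * size_weight x 0 k n = (1 - x) * (k%:R - x * (n%:R - 1)).
  by rewrite size_weightE; field; rewrite !pnatr_eq0 -!lt0n k0 (ltn_trans k0).
rewrite expect_dist3 ?(ltnW kn) // min0n minnn (minn_idPr (ltnW kn)).
have -> : size_weight x 0 k n * 0%:R + size_weight x k 0 n * k%:R + size_weight x n 0 k * k%:R =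
    k%:R - k%:R * size_weight x 0 k n by rewrite -[X in X - _]mulr1 -total; ring.
by rewrite mass0 quarter_loss_bound ?hi ?lo ?x0 ?x1 //; lra.
Qed.

Lemma near_optimal_large_mean (k : nat) (x : R) : (0 < k)%N -> 0 <= x < 1 ->
  k%:R <= x * (n%:R - 1) -> exists p, near_optimal k x p.
Proof.
move=> k0 /andP[x0 x1] large_b.
have K1 : 1 <= k%:R :> R by rewrite ler1n.
have n1 : 1 < n%:R :> R by nra.
have /andP[tb bt] := truncn_itv (le_trans (ler0n _ _) large_b).
set t := Num.truncn _ in tb bt; rewrite -natr1 in bt.
have kt : (k <= t)%N by rewrite -ltnS -(ltr_nat R) -natr1; lra.
have t2n : (t.+2 <= n)%N by rewrite -(ltr_nat R) -!natr1; nra.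
have T0 : 0 <= t%:R :> R by [].
have t2nR : t%:R + 1 + 1 <= n%:R :> R by rewrite !natr1 ler_nat.
have mean : n%:R * x = x * (n%:R - 1) + x by ring.
have tn : (t <= n)%N by rewrite ltnW // ltnW.
have nett : t != t.+1 by rewrite neq_ltn ltnSn.
have netn : t != n by rewrite neq_ltn (ltn_trans _ t2n).
have nesn : t.+1 != n by rewrite neq_ltn t2n.
exists (three_point x t t.+1 n); split.
  apply: three_point_factorial_moments; rewrite ?tn ?(ltnW t2n) // size_weightE -natr1.
  - apply: divr_ge0; last by nra.
    have : 0 <= (n%:R - n%:R * x) * (t%:R + 1 - x * (n%:R - 1)) by rewrite mulr_ge0 //; nra.
    nra.
  - apply: mulr_le0; last by rewrite invr_le0; nra.
    have : (n%:R - n%:R * x) * (t%:R - x * (n%:R - 1)) <= 0 by rewrite mulr_ge0_le0 //; nra.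
    nra.
  - apply: divr_ge0; last by rewrite mulr_ge0 //; lra.
    have [le_t1_mean|lt_mean_t1] := leP (t%:R + 1) (n%:R * x).
      by rewrite addr_ge0 ?mulr_ge0 //; lra.
    have : (n%:R * x - t%:R) * (t%:R + 1 - n%:R * x) <= n%:R * x * (1 - x) by apply: ler_pM; lra.
    nra.
have [total _ _] := size_weight_moments x nett netn nesn.
rewrite expect_dist3 ?tn ?(ltnW t2n) // !(minn_idPr _) ?(leq_trans kt) // -!mulrDl total mul1r.
have minK : Num.min (n%:R * x) k%:R <= k%:R by rewrite ge_min lexx orbT.
nra.
Qed.

Lemma near_optimal_bernoulli (k : nat) (x : R) : (0 < k <= n)%N -> 0 <= x <= 1 ->
  x = 1 \/ n = 1%N -> near_optimal k x (dist3 0 n n (1 - x) x 0).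
Proof.
move=> /andP[k0 kn] /andP[x0 x1] x1_or_n1; split.
  apply: dist3_factorial_moments; rewrite ?subr_ge0 //; first by rewrite addr0 subrK.
    by rewrite mulr0 mul0r !addr0 add0r mulrC.
  by case: x1_or_n1 => ->; rewrite ?expr1n; [ring | rewrite !mulr0 mul0r !addr0].
rewrite expect_dist3 // min0n (minn_idPr kn) mulr0 mul0r add0r addr0.
have min_le : Num.min (n%:R * x) k%:R <= x * k%:R.
  case: x1_or_n1 => [-> | n1]; first by rewrite mulr1 mul1r ge_min lexx orbT.
  by move: kn; rewrite n1 => k1; rewrite (_ : k = 1%N) ?mulr1 ?mul1r ?ge_min ?lexx //; lia.
have : 0 <= Num.min (n%:R * x) k%:R by rewrite le_min mulr_ge0 ?ler0n.
have : 1 <= k%:R :> R by rewrite ler1n.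
nra.
Qed.

Lemma exists_near_optimal (k : nat) (x : R) : (0 < k <= n)%N -> 0 <= x <= 1 ->
  exists p, near_optimal k x p.
Proof.
move=> /andP[k0 kn] /andP[x0 x1].
have [n_eq1|n1] := eqVneq n 1%N.
  by eexists; apply: near_optimal_bernoulli; rewrite ?x0 ?x1 ?k0 ?kn //; right.
have [->|xlt1] := eqVneq x 1.
  by eexists; apply: near_optimal_bernoulli; rewrite ?ler01 ?lexx ?k0 ?kn //; left.
have {xlt1} xlt1 : x < 1 by rewrite lt_neqAle xlt1.
have [small|] := ltP (x * (n%:R - 1)) (k%:R - 1).
  by apply: near_optimal_small_mean; rewrite ?k0 ?kn ?x0 ?x1.
have [mid lo|large _] := leP (x * (n%:R - 1)) k%:R.
  apply: near_optimal_mid_mean; rewrite ?x0 ?x1 ?lo ?mid ?k0 //=.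
  have : 2 <= n%:R :> R by rewrite ler_nat ltn_neqAle eq_sym n1 (leq_trans k0).
  by rewrite -(ltr_nat R) => ?; nra.
by apply: near_optimal_large_mean; rewrite ?x0 ?xlt1 // ltW.
Qed.

Lemma sum_card_closure_feasible (x : R) (theta : {ffun {set 'I_n} -> R}) :
  closure_feasible (fun _ => x) theta ->
  \sum_(S : {set 'I_n}) theta S * #|S|%:R = n%:R * x.
Proof.
move=> [_ [_ marginal]].
transitivity (\sum_(S : {set 'I_n}) \sum_(i < n | i \in S) theta S).
  by apply: eq_bigr => S _; rewrite sumr_const mulr_natr.
rewrite (exchange_big_dep predT) //= (eq_bigr (fun=> x)) ?sumr_const ?card_ord ?mulr_natl //.
Qed.

Lemma sum_card_sqr_pairwise_feasible (x : R) (theta : {ffun {set 'I_n} -> R}) :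
  pairwise_feasible (fun _ => x) theta ->
  \sum_(S : {set 'I_n}) theta S * #|S|%:R ^+ 2 = n%:R * x + (n ^_ 2)%:R * x ^+ 2.
Proof.
move=> [[_ [_ marginal]] pairs].
transitivity (\sum_(S : {set 'I_n}) \sum_(i < n | i \in S) \sum_(j < n | j \in S) theta S).
  by apply: eq_bigr => S _; rewrite !sumr_const -mulrnA -[RHS]mulr_natr natrM expr2.
have joint (i j : 'I_n) : \sum_(S : {set 'I_n} | (i \in S) && (j \in S)) theta S =
    if i == j then x else x ^+ 2.
  have [<-|neqij] := eqVneq i j.
    by rewrite -(marginal i); apply: eq_bigl => S; rewrite andbb.
  case: (ltngtP i j) => [ltij|ltji|/val_inj eqij]; rewrite ?expr2.
  - exact: pairs.
  - by rewrite -(pairs j i) //; apply: eq_bigl => S; rewrite andbC.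
  - by rewrite eqij eqxx in neqij.
rewrite (exchange_big_dep predT) //= (eq_bigr (fun=> x + x ^+ 2 *+ n.-1)).
  by rewrite sumr_const card_ord mulrnDl ffactnS ffactn1 -mulrnA !mulr_natl mulnC.
move=> i _; rewrite (exchange_big_dep predT) //= (bigD1 i) //= joint eqxx.
congr (_ + _); rewrite (eq_bigr (fun=> x ^+ 2)) ?sumr_const ?cardC1 ?card_ord //.
by move=> j neqji; rewrite joint eq_sym (negbTE neqji).
Qed.

Lemma lp_value_budget_le_min (k : nat) (x : R) (theta : {ffun {set 'I_n} -> R}) :
  closure_feasible (fun _ => x) theta ->
  lp_value (@budget_fun R n k) theta <= Num.min (n%:R * x) k%:R.
Proof.
move=> feas; have [theta_ge0 [mass _]] := feas.
have -> : k%:R = \sum_(S : {set 'I_n}) theta S * k%:R by rewrite -mulr_suml mass mul1r.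
rewrite le_min -(sum_card_closure_feasible feas).
by apply/andP; split; apply: ler_sum => S _; rewrite ler_wpM2l // ler_nat ?geq_minl ?geq_minr.
Qed.

(* [3 m / 2 - m^2 / (2 k)] interpolates [min(m, k)] at [m = 0, k, 2k] and lies above it on [[0, 2k]]. *)
Lemma lp_value_budget_le_quadratic (k : nat) (x : R) (theta : {ffun {set 'I_n} -> R}) :
  (0 < k)%N -> (n <= k.*2)%N -> pairwise_feasible (fun _ => x) theta ->
  lp_value (@budget_fun R n k) theta <=
  3 / 2 * (n%:R * x) - (n%:R * x + (n ^_ 2)%:R * x ^+ 2) / (2 * k%:R).
Proof.
move=> k0 nk feas; have [[theta_ge0 _] _] := feas.
have K0 : 0 < k%:R :> R by rewrite ltr0n.
rewrite -(sum_card_sqr_pairwise_feasible feas) -(sum_card_closure_feasible feas.1).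
rewrite mulr_sumr mulr_suml -sumrB; apply: ler_sum => S _.
rewrite mulrCA -mulrA -mulrBr ler_wpM2l // /budget_fun.
have Sk : (#|S| <= k.*2)%N by rewrite (leq_trans _ nk) // -[leqRHS](card_ord n) max_card.
rewrite -(ler_pM2l (_ : 0 < 2 * k%:R)) ?mulr_gt0 //.
have -> : 2 * k%:R * (3 / 2 * #|S|%:R - #|S|%:R ^+ 2 / (2 * k%:R)) =
    3 * k%:R * #|S|%:R - #|S|%:R ^+ 2 :> R by field; rewrite pnatr_eq0 -lt0n.
have S2k : #|S|%:R <= 2 * k%:R :> R by rewrite -[2]/(2%N%:R) -natrM mul2n ler_nat.
have S0 : 0 <= #|S|%:R :> R by [].
have [leSk|ltkS] := leqP #|S| k.
  have : #|S|%:R <= k%:R :> R by rewrite ler_nat.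
  nra.
have : k%:R <= #|S|%:R :> R by rewrite ler_nat ltnW.
nra.
Qed.

End GroundSet.

From mathcomp Require Import classical_sets.

Section LinearProgramValue.
Variables (R : realType) (n : nat) (f : {set 'I_n} -> R).
Variables (P : {ffun {set 'I_n} -> R} -> Prop) (M : R).
Hypothesis lp_value_le : forall theta, P theta -> lp_value f theta <= M.

Lemma lp_value_le_sup (theta : {ffun {set 'I_n} -> R}) : P theta ->
  lp_value f theta <= sup [set v | exists theta, P theta /\ v = lp_value f theta].
Proof.
move=> Ptheta; apply: sup_upper_bound; last by exists theta.
by split; [exists (lp_value f theta), theta | exists M => _ [t [Pt ->]]; exact: lp_value_le].
Qed.

Lemma sup_lp_value_le (theta : {ffun {set 'I_n} -> R}) : P theta ->
  sup [set v | exists theta, P theta /\ v = lp_value f theta] <= M.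
Proof.
move=> Ptheta; apply: ge_sup; first by exists (lp_value f theta), theta.
by move=> _ [t [Pt ->]]; exact: lp_value_le.
Qed.

End LinearProgramValue.

Section BudgetExtensions.
Variables (R : realType) (n k : nat).
Hypothesis kn : (0 < k <= n)%N.

Lemma budget_extensions_bounds (x : R) : 0 <= x <= 1 ->
  let fp := concave_closure (@budget_fun R n k) (fun _ => x) in
  let fpp := upper_pairwise_ext (@budget_fun R n k) (fun _ => x) in
  [/\ fp <= Num.min (n%:R * x) k%:R,
      (4 * k%:R - 1) * Num.min (n%:R * x) k%:R <= 4 * k%:R * fpp & fpp <= fp].
Proof.
move=> x01 fp fpp; have [p [moments near]] := exists_near_optimal kn x01.
rewrite {}/fp {}/fpp /concave_closure /upper_pairwise_ext.
have feas := symmetric_lift_pairwise_feasible moments.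
have ub := @lp_value_budget_le_min R n k x.
have ub_pairwise t : pairwise_feasible (fun _ => x) t -> _ := fun h => ub t h.1.
split; first exact: (sup_lp_value_le ub feas.1).
  apply: le_trans near _; rewrite -lp_value_symmetric_lift ler_wpM2l ?mulr_ge0 ?ler0n //.
  exact: (lp_value_le_sup ub_pairwise feas).
apply: (sup_lp_value_le _ feas) => t feas_t.
exact: (lp_value_le_sup ub feas_t.1).
Qed.

Lemma budget_extensions_at_half : n = k.*2 ->
  concave_closure (@budget_fun R n k) (fun _ => 2^-1) = k%:R /\
  upper_pairwise_ext (@budget_fun R n k) (fun _ => 2^-1) = k%:R - 4^-1.
Proof.
move=> n2k; have /andP[k0 le_kn] := kn.
have K1 : 1 <= k%:R :> R by rewrite ler1n.
have x01 : 0 <= (2^-1 : R) <= 1 by apply/andP; split; lra.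
have mean : k%:R = n%:R * 2^-1 :> R by rewrite n2k -mul2n natrM; field.
have [fp_le loss _] := budget_extensions_bounds x01.
rewrite -mean minxx in fp_le loss.
split; apply/le_anti; rewrite ?fp_le /=.
  have point_mass := point_mass_factorial_moments le_kn mean.
  apply: le_trans (lp_value_le_sup (@lp_value_budget_le_min R n k _)
    (symmetric_lift_closure_feasible point_mass)).
  by rewrite lp_value_symmetric_lift expect_dist3 // minnn !mul0r !addr0 mul1r.
have [p [moments _]] := exists_near_optimal kn x01.
have quadratic := @lp_value_budget_le_quadratic R n k 2^-1 _ k0 (eq_leq n2k).
apply/andP; split.
  apply: le_trans (sup_lp_value_le quadratic (symmetric_lift_pairwise_feasible moments)) _.
  rewrite natr_ffact2 n2k -mul2n natrM le_eqVlt; apply/orP; left; apply/eqP.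
  by field; rewrite pnatr_eq0 -lt0n.
by rewrite -(ler_pM2l (_ : 0 < 4 * k%:R)) ?mulr_gt0 //; nra.
Qed.

End BudgetExtensions.

Theorem mainTheorem14 (R : realType) (n k : nat) :
  (1 <= n)%N -> (1 <= k <= n)%N ->
  (forall x : R, 0 <= x <= 1 ->
     let fp := concave_closure (@budget_fun R n k) (fun _ => x) in
     let fpp := upper_pairwise_ext (@budget_fun R n k) (fun _ => x) in
     (fpp = 0 -> fp = 0) /\
     (fpp != 0 -> fp / fpp <= (4 * k%:R) / (4 * k%:R - 1))) /\
  (~~ odd n -> k = n./2 ->
     let fp := concave_closure (@budget_fun R n k) (fun _ => 2^-1) in
     let fpp := upper_pairwise_ext (@budget_fun R n k) (fun _ => 2^-1) in
     fp / fpp = (4 * k%:R) / (4 * k%:R - 1)).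
Proof.
move=> _ kn; have K1 : 1 <= k%:R :> R by rewrite ler1n; case/andP: kn.
split=> [x x01 fp fpp | even_n k_half].
  have [fp_le loss fpp_le_fp] := budget_extensions_bounds kn x01.
  rewrite -/fp -/fpp in fp_le loss fpp_le_fp.
  have m0 : 0 <= Num.min (n%:R * x) k%:R :> R.
    by rewrite le_min ler0n mulr_ge0 //; case/andP: x01.
  split=> [fpp0 | fpp_neq0].
    have m_le0 : Num.min (n%:R * x) k%:R <= 0 by move: loss; rewrite fpp0 mulr0; nra.
    by apply/le_anti; rewrite (le_trans fp_le m_le0) -fpp0 fpp_le_fp.
  have fpp_gt0 : 0 < fpp by rewrite lt_def fpp_neq0 /=; nra.
  by rewrite ler_pdivrMr // mulrAC ler_pdivlMr; nra.
have n2k : n = k.*2 by rewrite k_half -[LHS](odd_double_half n) (negbTE even_n).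
have [-> ->] := budget_extensions_at_half R kn n2k.
by field; rewrite lt0r_neq0 //; lra.
Qed.
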